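(* Let $n>k\ge 1$ be integers, not both even, such that $n\neq Mk$ for every positive integer $M$. Let $\alpha=\lceil n/2\rceil-\lfloor (n-k)/2\rfloor$, $\beta=k-\alpha$, and $G=\sqrt{n/k}\,W_n^H\Sigma W_k$. Then no systematic DFT frame $G_{\mathrm{sys}}=GG_k^{-1}$ (with $G_k$ any $k\times k$ submatrix of $G$ formed by $k$ distinct rows) is tight; i.e. for every such $G_k$ there is no $c>0$ with $G_{\mathrm{sys}}^HG_{\mathrm{sys}}=cI_k$.
   Context: For a positive integer $l$, $W_l$ denotes the unitary $l\times l$ DFT matrix, $(W_l)_{r,s}=\frac{1}{\sqrt l}e^{-j2\pi(r-1)(s-1)/l}$, and $^H$ denotes conjugate transpose. $\Sigma$ is the $n\times k$ matrix $\begin{pmatrix} I_\alpha & 0\\ 0 & 0\\ 0 & I_\beta\end{pmatrix}$: its first $\alpha$ rows are $(I_\alpha\ 0)$, its last $\beta$ rows are $(0\ I_\beta)$, and its middle $n-k$ rows are zero. For any choice of $k$ distinct rows of $G$, the resulting $k\times k$ submatrix $G_k$ is invertible, and the matrix $G_{\mathrm{sys}}=GG_k^{-1}$ (an $n\times k$ matrix containing $I_k$ as a submatrix) is called a systematic DFT frame. A frame with $n\times k$ analysis operator $F$ is tight if $F^HF=cI_k$ for some $c>0$, equivalently all eigenvalues of $F^HF$ are equal. *)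

From HB Require Import structures.
From mathcomp Require Import all_boot all_order all_algebra.
From mathcomp Require Import reals trigo.
From mathcomp Require Import complex.
Set Implicit Arguments. Unset Strict Implicit. Unset Printing Implicit Defensive.
Import Order.TTheory GRing.Theory Num.Theory.
Local Open Scope ring_scope.
Local Open Scope complex_scope.

Section Defs.
Variable R : realType.

Definition expi_neg (l m : nat) : R[i] :=
  let t := 2 * pi * m%:R / l%:R in (cos t) +i* (- sin t).

(* unitary l x l DFT matrix: (W_l)_{r,s} = 1/sqrt l * e^{-j2pi r s / l} (0-based) *)
Definition DFT (l : nat) : 'M[R[i]]_l :=
  \matrix_(i0 < l, j0 < l) (((Num.sqrt (l%:R : R))^-1)%:C * expi_neg l (i0 * j0)%N).

Definition mxH (m p : nat) (A : 'M[R[i]]_(m, p)) : 'M[R[i]]_(p, m) :=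
  (map_mx (fun z : R[i] => z^*) A)^T.

(* Sigma: first a rows (I_a 0), last b rows (0 I_b), middle rows zero *)
Definition Sigma (n k a : nat) : 'M[R[i]]_(n, k) :=
  \matrix_(r < n, s < k)
    (if ((r < a)%N && (s == r :> nat)) || ((a <= s)%N && (s + n == r + k)%N)
     then 1 else 0).

Definition alpha (n k : nat) : nat := (uphalf n - (n - k)./2)%N.
Definition beta (n k : nat) : nat := (k - alpha n k)%N.

Definition Gmat (n k : nat) : 'M[R[i]]_(n, k) :=
  (Num.sqrt (n%:R / k%:R : R))%:C *: (mxH (DFT n) *m Sigma n k (alpha n k) *m DFT k).

Definition Gsys (n k : nat) (f : 'I_k -> 'I_n) : 'M[R[i]]_(n, k) :=
  Gmat n k *m invmx (rowsub f (Gmat n k)).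

Definition tight (n k : nat) (F : 'M[R[i]]_(n, k)) : Prop :=
  exists c : R, 0 < c /\ mxH F *m F = (c%:C)%:M.

End Defs.

From mathcomp Require Import all_boot all_order all_algebra.
From mathcomp Require Import reals trigo.
From mathcomp Require Import complex.
From mathcomp Require Import ring lra zify.
Set Implicit Arguments. Unset Strict Implicit. Unset Printing Implicit Defensive.
Import Order.TTheory GRing.Theory Num.Theory.
Local Open Scope ring_scope.
Local Open Scope complex_scope.

(* G^H G = (n/k) I because W_n and W_k are unitary and Sigma is an isometry,
   so G_sys^H G_sys = (n/k) G_k^-H G_k^-1 is scalar only if G_k G_k^H is scalar,
   i.e. only if the selected rows of G are pairwise orthogonal.  The inner
   product of rows p and q of G is (1/k) sum_s u^(tau s) with u = w^(q-p),
   w = e^(-2 pi j/n), and tau s the row of the 1 in column s of Sigma; since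
   u^(k-alpha) (u - 1) times this sum is u^k - 1, orthogonality forces
   p k = q k (mod n).  All k selected rows then lie in one residue class
   modulo n / gcd(n,k), which has gcd(n,k) elements below n, so gcd(n,k) = k
   and k divides n. *)

Section ResidueCounting.
Local Open Scope nat_scope.

Lemma congr_mulr_div_gcd x y k n : 0 < n ->
  x * k = y * k %[mod n] -> x = y %[mod n %/ gcdn n k].
Proof.
move=> n_gt0; wlog le_yx : x y / y <= x => [hwlog|].
  by case: (leqP y x) => [/hwlog//|/ltnW le_xy /esym/(hwlog _ _ le_xy)->].
set g := gcdn n k; have g_gt0 : 0 < g by rewrite gcdn_gt0 n_gt0.
have def_n : n = n %/ g * g by rewrite divnK ?dvdn_gcdl.
have def_k : k = k %/ g * g by rewrite divnK ?dvdn_gcdr.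
have co_nk : coprime (n %/ g) (k %/ g).
  by rewrite /coprime -(eqn_pmul2r g_gt0) mul1n muln_gcdl -def_n -def_k.
move/eqP; rewrite eqn_mod_dvd ?leq_mul2r ?le_yx ?orbT // -mulnBl.
rewrite {1}def_n {1}def_k mulnA dvdn_pmul2r // Gauss_dvdl //.
by rewrite -eqn_mod_dvd // => /eqP.
Qed.

Lemma leq_inj_congr_mod k d g (f : 'I_k -> nat) : 0 < d -> injective f ->
  (forall i, f i < d * g) -> (forall i j, f i = f j %[mod d]) -> k <= g.
Proof.
move=> d_gt0 f_inj f_lt f_mod.
have quo_lt i : f i %/ d < g by rewrite ltn_divLR // mulnC.
pose h i : 'I_g := Ordinal (quo_lt i).
have h_inj : injective h.
  move=> i j /(congr1 val) /= eq_quo; apply: f_inj.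
  by rewrite (divn_eq (f i) d) (divn_eq (f j) d) eq_quo (f_mod i j).
by have := leq_card h h_inj; rewrite !card_ord.
Qed.

Lemma dvdn_inj_congr_mulr k n (f : 'I_k -> 'I_n) : 0 < k -> injective f ->
  (forall i j, f i * k = f j * k %[mod n]) -> k %| n.
Proof.
move=> k_gt0 f_inj f_mod.
have n_gt0 : 0 < n by case: (f (Ordinal k_gt0)) => i /(leq_ltn_trans _)->.
set g := gcdn n k.
have g_le_k : g <= k by rewrite dvdn_leq ?dvdn_gcdr.
have k_le_g : k <= g.
  apply: (@leq_inj_congr_mod k (n %/ g) g (val \o f)).
  - by rewrite divn_gt0 ?gcdn_gt0 ?n_gt0 // dvdn_leq ?dvdn_gcdl.
  - exact: inj_comp val_inj f_inj.
  - by move=> i; rewrite divnK ?dvdn_gcdl /=.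
  - by move=> i j; apply: congr_mulr_div_gcd => //; apply: f_mod.
have -> : k = g by apply/eqP; rewrite eqn_leq k_le_g g_le_k.
exact: dvdn_gcdl.
Qed.

End ResidueCounting.

Lemma sum_expr_root1_eq0 (F : idomainType) (z : F) l :
  z ^+ l = 1 -> z != 1 -> \sum_(t < l) z ^+ t = 0.
Proof.
move=> zl1 z_neq1; apply/eqP; move: (subrX1 z l).
by rewrite zl1 subrr => /esym/eqP; rewrite mulf_eq0 subr_eq0 (negbTE z_neq1).
Qed.

Lemma mxsub_inj1 (F : pzRingType) m p (f : 'I_p -> 'I_m) : injective f ->
  mxsub f f (1%:M : 'M[F]_m) = 1%:M.
Proof. by move=> f_inj; apply/matrixP => i j; rewrite !mxE (inj_eq f_inj). Qed.

(* Column s of [Sigma n k a] is the unit vector of index [tau n k a s]. *)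
Definition tau (n k a s : nat) : nat := if (s < a)%N then s else (s + (n - k))%N.

(* Multiplying by u^(k-a) maps the exponents a + (n-k), ..., n-1 of the second
   block to 0, ..., k-a-1 modulo n; both blocks are then geometric series. *)
Lemma tau_sum_factor (F : comPzRingType) (u : F) n k a :
  (a <= k)%N -> (k <= n)%N -> u ^+ n = 1 ->
  u ^+ (k - a) * (\sum_(s < k) u ^+ tau n k a s) * (u - 1) = u ^+ k - 1.
Proof.
move=> a_le_k k_le_n un1.
rewrite -(big_mkord xpredT (fun s => u ^+ tau n k a s)) (big_cat_nat (leq0n a) a_le_k) /=.
rewrite (@eq_big_nat _ _ _ 0 a _ (fun s => u ^+ s)); last first.
  by move=> s /andP[_ s_lt_a]; rewrite /tau s_lt_a.
rewrite big_mkord (big_addn 0 k a).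
rewrite (@eq_big_nat _ _ _ 0 (k - a) _ (fun s => u ^+ (s + a + (n - k)))); last first.
  by move=> s _; rewrite /tau ltnNge leq_addl.
have shift : u ^+ (k - a) * (\sum_(s < k - a) u ^+ (s + a + (n - k)))
              = \sum_(s < k - a) u ^+ s.
  rewrite big_distrr /=; apply: eq_bigr => s _; rewrite -exprD.
  by rewrite (_ : (k - a + (s + a + (n - k)) = s + n)%N) ?exprD ?un1 ?mulr1 //; lia.
rewrite big_mkord [u ^+ (k - a) * _]mulrDr shift mulrDl -mulrA.
rewrite ![_ * (u - 1)]mulrC -!subrX1.
by rewrite mulrBr mulr1 -exprD subnK // addrA subrK.
Qed.

Lemma expr_eq1_of_tau_sum_eq0 (F : comPzRingType) (u : F) n k a :
  (a <= k)%N -> (k <= n)%N -> u ^+ n = 1 -> \sum_(s < k) u ^+ tau n k a s = 0 -> u ^+ k = 1.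
Proof.
move=> a_le_k k_le_n un1 sum0; apply/eqP; rewrite -subr_eq0.
by rewrite -(tau_sum_factor a_le_k k_le_n un1) sum0 mulr0 mul0r.
Qed.

Lemma alpha_le n k : (0 < k)%N -> (k < n)%N -> (alpha n k <= k)%N.
Proof.
move=> k_gt0 k_lt_n; rewrite /alpha leq_subLR uphalf_half.
have := odd_double_half n; have := odd_double_half (n - k).
have := leq_b1 (odd n); have := leq_b1 (odd (n - k)); rewrite -!muln2.
lia.
Qed.

Section RootOfUnity.
Variable R : realType.

Definition expjN (x : R) : R[i] := (cos x) +i* (- sin x).

Lemma expjND x y : expjN (x + y) = expjN x * expjN y.
Proof.
by rewrite /expjN cosD sinD; apply/eqP; rewrite eq_complex /=; apply/andP; split; apply/eqP; ring.
Qed.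

Lemma expjN_mulr_nat x m : expjN (x * m%:R) = expjN x ^+ m.
Proof.
rewrite mulr_natr; elim: m => [|m IHm]; last by rewrite mulrS exprS expjND IHm.
by rewrite /expjN mulr0n cos0 sin0 oppr0.
Qed.

Lemma conjc_expjN x : conjc (expjN x) * expjN x = 1.
Proof.
rewrite /expjN; apply/eqP; rewrite eq_complex /=; apply/andP; split; apply/eqP.
  by rewrite -(cos2Dsin2 x); ring.
by ring.
Qed.

Lemma conjc_eqV (z : R[i]) : conjc z * z = 1 -> conjc z = z^-1.
Proof.
move=> zJz; have z_neq0 : z != 0.
  by apply: contra_eq_neq zJz => ->; rewrite mulr0 eq_sym oner_neq0.
by rewrite -[LHS]mulr1 -(mulfV z_neq0) mulrA zJz mul1r.
Qed.

Definition omega (l : nat) : R[i] := expjN (2 * pi / l%:R).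

Lemma expi_negE l m : expi_neg R l m = omega l ^+ m.
Proof. by rewrite /omega -expjN_mulr_nat mulrAC. Qed.

Lemma conjc_omegaX l m : conjc (omega l ^+ m) = (omega l ^+ m)^-1.
Proof. by apply: conjc_eqV; rewrite rmorphXn -exprMn conjc_expjN expr1n. Qed.

Lemma omega_prim l : (0 < l)%N -> l.-primitive_root (omega l).
Proof.
move=> l_gt0; have l_neq0 : l%:R != 0 :> R by rewrite pnatr_eq0 -lt0n.
have omega_order : omega l ^+ l = 1.
  by rewrite -expjN_mulr_nat divfK // /expjN mulr_natl cos2pi sin2pi oppr0.
have [m prim_m m_dvd_l] := prim_order_exists l_gt0 omega_order.
have m_gt0 := prim_order_gt0 prim_m.
have [m_lt_l|l_le_m] := ltnP m l; last first.
  have m_eq_l : m = l by apply/eqP; rewrite eqn_leq l_le_m dvdn_leq.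
  by rewrite m_eq_l in prim_m.
exfalso.
have := prim_expr_order prim_m; rewrite -expjN_mulr_nat.
set q := (m%:R / l%:R : R).
have q_gt0 : 0 < q by rewrite divr_gt0 ?ltr0n.
have q_lt1 : q < 1 by rewrite ltr_pdivrMr ?ltr0n // mul1r ltr_nat.
have -> : 2 * pi / l%:R * m%:R = (pi * q) *+ 2 by rewrite /q; ring.
case; rewrite cos_mulr2n => cos_eq _.
have sin_pos : 0 < sin (pi * q).
  by apply: sin_gt0_pi; apply/andP; split; have := @pi_gt0 R; nra.
have : sin (pi * q) ^+ 2 = 0 by rewrite sin2cos2; move: cos_eq; rewrite mulr2n; lra.
by move/eqP; rewrite expf_eq0 /= (gt_eqF sin_pos).
Qed.

Lemma omega_ratio_expr_eq1 l x y m : (0 < l)%N ->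
  ((omega l ^+ x / omega l ^+ y) ^+ m == 1) = (x * m == y * m %[mod l])%N.
Proof.
move=> l_gt0; have prim := omega_prim l_gt0.
have omegaX_neq0 j : omega l ^+ j != 0.
  by rewrite expf_neq0 // (prim_root_eq0 prim) -lt0n.
rewrite exprMn exprVn -!exprM -(inj_eq (mulIf (omegaX_neq0 (y * m)%N))).
by rewrite divfK // mul1r (eq_prim_root_expr prim).
Qed.

End RootOfUnity.


Section ConjTranspose.
Variable R : realType.
Implicit Types (m p q : nat).

Lemma mxHE m p (A : 'M[R[i]]_(m, p)) i j : mxH A i j = conjc (A j i).
Proof. by rewrite !mxE. Qed.

Lemma mxHM m p q (A : 'M[R[i]]_(m, p)) (B : 'M_(p, q)) :
  mxH (A *m B) = mxH B *m mxH A.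
Proof.
apply/matrixP => i j; rewrite !mxE rmorph_sum; apply: eq_bigr => t _.
by rewrite !mxE rmorphM mulrC.
Qed.

Lemma mxHZ m p (c : R[i]) (A : 'M_(m, p)) : mxH (c *: A) = conjc c *: mxH A.
Proof. by apply/matrixP => i j; rewrite !mxE rmorphM. Qed.

Lemma mxHK m p (A : 'M[R[i]]_(m, p)) : mxH (mxH A) = A.
Proof. by apply/matrixP => i j; rewrite !mxE conjcK. Qed.

Lemma mxH1 m : mxH (1%:M : 'M[R[i]]_m) = 1%:M.
Proof.
by apply/matrixP => i j; rewrite !mxE eq_sym; case: (_ == _); rewrite ?rmorph1 ?rmorph0.
Qed.

Lemma mxH_mxsub m p m' p' (f : 'I_m' -> 'I_m) (g : 'I_p' -> 'I_p)
  (A : 'M[R[i]]_(m, p)) :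
  mxH (mxsub f g A) = mxsub g f (mxH A).
Proof. by apply/matrixP => i j; rewrite !mxE. Qed.

Lemma mxsub_mulmxH m p q (f : 'I_q -> 'I_m) (A : 'M[R[i]]_(m, p)) :
  rowsub f A *m mxH (rowsub f A) = mxsub f f (A *m mxH A).
Proof. by rewrite mxsub_mul mxH_mxsub. Qed.

Lemma conjc_realM (x : R) (z : R[i]) : conjc (x%:C * z) = x%:C * conjc z.
Proof.
by case: z => a b; apply/eqP; rewrite eq_complex /=; apply/andP; split; apply/eqP; ring.
Qed.

End ConjTranspose.

Section DFT.
Variable R : realType.

Lemma DFTC l (i j : 'I_l) : DFT R l i j = DFT R l j i.
Proof. by rewrite !mxE mulnC. Qed.

Lemma DFT_conj_mul l (r i j : 'I_l) :
  conjc (DFT R l r i) * DFT R l r j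
  = (l%:R^-1 : R)%:C * (omega R l ^+ j / omega R l ^+ i) ^+ r.
Proof.
rewrite !mxE !expi_negE conjc_realM conjc_omegaX exprMn exprVn -!exprM !(mulnC r).
have inv_sqrt2 : (Num.sqrt (l%:R : R))^-1 * (Num.sqrt l%:R)^-1 = l%:R^-1.
  by rewrite -invfM -expr2 sqr_sqrtr ?ler0n.
by rewrite -inv_sqrt2 rmorphM; ring.
Qed.

Lemma DFT_unitary l : DFT R l *m mxH (DFT R l) = 1%:M.
Proof.
apply/matrixP => a b; rewrite [LHS]mxE [RHS]mxE.
have l_gt0 : (0 < l)%N by apply: leq_ltn_trans (ltn_ord a).
set u := omega R l ^+ a / omega R l ^+ b.
under eq_bigr => t _ do rewrite mxHE mulrC DFTC [DFT R l a t]DFTC DFT_conj_mul -/u.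
rewrite -big_distrr /=.
have u_order : u ^+ l = 1 by apply/eqP; rewrite omega_ratio_expr_eq1 // !modnMl.
have [a_eq_b|a_neq_b] := eqVneq a b.
  have -> : u = 1 by apply/eqP; rewrite -[u]expr1 omega_ratio_expr_eq1 // a_eq_b.
  under eq_bigr do rewrite expr1n.
  rewrite sumr_const card_ord -(rmorph_nat (real_complex R)) -rmorphM.
  by rewrite mulVf ?pnatr_eq0 -?lt0n // rmorph1.
rewrite sum_expr_root1_eq0 ?mulr0 //.
by rewrite -[u]expr1 omega_ratio_expr_eq1 // !muln1 !modn_small.
Qed.

End DFT.


Section Tau.
Variables (n k a : nat).
Hypothesis k_le_n : (k <= n)%N.

Lemma tau_lt (s : 'I_k) : (tau n k a s < n)%N.
Proof. by rewrite /tau; case: ifP => _; have := ltn_ord s; lia. Qed.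

Definition tau_ord (s : 'I_k) : 'I_n := Ordinal (tau_lt s).

Lemma tau_ord_inj : injective tau_ord.
Proof.
move=> s s' /(congr1 val); rewrite /= /tau => eq_tau; apply: val_inj => /=.
by have := ltn_ord s; have := ltn_ord s'; move: eq_tau; do 2 case: ifP => ?; lia.
Qed.

End Tau.


Section Sigma.
Variables (R : realType) (n k a : nat).
Hypothesis k_le_n : (k <= n)%N.

Lemma Sigma_colsub : Sigma R n k a = colsub (tau_ord a k_le_n) 1%:M.
Proof.
apply/matrixP => t s; rewrite !mxE -val_eqE /= /tau.
have := ltn_ord s; have := ltn_ord t.
by case: ifP => cond; case: eqP => // tau_eq ? ?; move: cond tau_eq; case: ifP => ?; lia.
Qed.

Lemma mulmx_Sigma m (A : 'M[R[i]]_(m, n)) :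
  A *m Sigma R n k a = colsub (tau_ord a k_le_n) A.
Proof. by rewrite Sigma_colsub mulmx_colsub mulmx1. Qed.

Lemma Sigma_isometry : mxH (Sigma R n k a) *m Sigma R n k a = 1%:M.
Proof.
rewrite mulmx_Sigma {1}Sigma_colsub mxH_mxsub mxH1 -mxsubcr.
exact/mxsub_inj1/tau_ord_inj.
Qed.

End Sigma.

Section Gmat.
Variables (R : realType) (n k : nat).
Hypothesis k_le_n : (k <= n)%N.

Local Notation a := (alpha n k).
Local Notation W := (DFT R).

Lemma Gmat_isometry : mxH (Gmat R n k) *m Gmat R n k = (n%:R / k%:R : R)%:C%:M.
Proof.
rewrite /Gmat mxHZ -scalemxAl -scalemxAr scalerA !mxHM mxHK.
have -> : mxH (W k) *m (mxH (Sigma R n k a) *m W n)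
            *m (mxH (W n) *m Sigma R n k a *m W k) = 1%:M.
  rewrite !mulmxA -[_ *m W n *m mxH (W n)]mulmxA DFT_unitary mulmx1.
  rewrite -[_ *m mxH (Sigma R n k a) *m _]mulmxA Sigma_isometry // mulmx1.
  exact/mulmx1C/DFT_unitary.
by rewrite scalemx1 conjc_real -rmorphM -expr2 sqr_sqrtr ?divr_ge0 ?ler0n.
Qed.

Lemma Gmat_gram_entry (i j : 'I_n) :
  (Gmat R n k *m mxH (Gmat R n k)) i j =
  (k%:R^-1 : R)%:C * \sum_(s < k) (omega R n ^+ j / omega R n ^+ i) ^+ tau n k a s.
Proof.
have n_gt0 : (0 < n)%N by apply: leq_ltn_trans (ltn_ord i).
rewrite /Gmat mulmx_Sigma mxHZ conjc_real -scalemxAl -scalemxAr scalerA mxHM.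
rewrite -mulmxA (mulmxA (W k)) DFT_unitary mul1mx mxH_mxsub mxHK.
rewrite mxE [X in _ * X]mxE.
under eq_bigr => s _
  do rewrite [colsub _ _ _ _]mxE [rowsub _ _ _ _]mxE mxHE DFT_conj_mul.
rewrite -big_distrr /= mulrA -!rmorphM -expr2 sqr_sqrtr ?divr_ge0 ?ler0n //.
by rewrite mulrAC divff ?mul1r // pnatr_eq0 -lt0n.
Qed.

End Gmat.




Section SystematicFrame.
Variable R : realType.

Lemma tight_sys_gram n k (G : 'M[R[i]]_(n, k)) (f : 'I_k -> 'I_n) (lam : R[i]) :
  lam != 0 -> mxH G *m G = lam%:M -> rowsub f G \in unitmx ->
  tight (G *m invmx (rowsub f G)) ->
  exists mu : R[i], rowsub f G *m mxH (rowsub f G) = mu%:M.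
Proof.
move=> lam_neq0 GHG Y_unit [c [c_gt0 GsysH]].
set Y := rowsub f G in Y_unit GsysH *; set X := invmx Y in GsysH.
have c_neq0 : c%:C != 0 by rewrite fmorph_eq0 gt_eqF.
have nu_neq0 : c%:C / lam != 0 by rewrite mulf_neq0 ?invr_eq0.
have XHX : mxH X *m X = (c%:C / lam)%:M.
  apply: (scalerI lam_neq0); rewrite scale_scalar_mx mulrC divfK // -GsysH mxHM.
  by rewrite mulmxA -(mulmxA _ (mxH G)) GHG mul_mx_scalar -scalemxAl.
have XY : X *m Y = 1%:M by apply: mulVmx.
have nu_YHY : (c%:C / lam) *: mxH Y *m Y = 1%:M.
  by rewrite -mul_mx_scalar -XHX !mulmxA -mxHM -mulmxA XY mxH1 mulmx1.
exists (c%:C / lam)^-1.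
apply: (scalerI nu_neq0); rewrite scalemxAr (mulmx1C nu_YHY) scale_scalar_mx.
by rewrite mulfV.
Qed.

End SystematicFrame.

Theorem corollary1 (R : realType) (n k : nat)
  (hk : (1 <= k)%N) (hkn : (k < n)%N)
  (hnotbotheven : ~~ (~~ odd n && ~~ odd k))
  (hmult : forall M : nat, (0 < M)%N -> n != (M * k)%N)
  (f : 'I_k -> 'I_n) (finj : injective f)
  (hinv : rowsub f (Gmat R n k) \in unitmx) :
  ~ tight (Gsys R f).
Proof.
have k_le_n := ltnW hkn; have n_gt0 := leq_ltn_trans (leq0n k) hkn.
have nk_neq0 : (n%:R / k%:R : R)%:C != 0.
  by rewrite fmorph_eq0 mulf_neq0 ?invr_eq0 ?pnatr_eq0 -?lt0n.
move=> /(tight_sys_gram nk_neq0 (Gmat_isometry R k_le_n) hinv) [mu YYH].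
have fk_congr i j : (f i * k = f j * k %[mod n])%N.
  have [->//|i_neq_j] := eqVneq i j.
  move/matrixP/(_ i j): YYH; rewrite mxsub_mulmxH mxE Gmat_gram_entry //.
  rewrite mxE (negbTE i_neq_j) mulr0n => /eqP.
  rewrite mulf_eq0 fmorph_eq0 invr_eq0 pnatr_eq0 eqn0Ngt hk /= => /eqP.
  move/(expr_eq1_of_tau_sum_eq0 (alpha_le hk hkn) k_le_n).
  have ratio_order : (omega R n ^+ f j / omega R n ^+ f i) ^+ n = 1.
    by apply/eqP; rewrite omega_ratio_expr_eq1 // !modnMl.
  by move=> /(_ ratio_order)/eqP; rewrite omega_ratio_expr_eq1 // eq_sym => /eqP.
have k_dvd_n := dvdn_inj_congr_mulr hk finj fk_congr.
have /negP[] : n != (n %/ k * k)%N by apply: hmult; rewrite divn_gt0.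
by rewrite divnK.
Qed.
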